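(* Let $\sigma\in S_t$, $p\in S_k$ and $1\le s\le k$. (i) If for each $a\le s$ the word $p_ap_{a+1}\cdots p_{\min(a+t-1,k)}$ is not order-isomorphic to $\sigma_1\sigma_2\cdots\sigma_{\min(t,k-a+1)}$, then $\{1,2,\dots,s\}$ is reversibly deletable for $p$ with respect to $\{(\sigma,[t-1])\}$. (ii) If for each $a\le s$ the word $p_ap_{a+1}\cdots p_{\min(a+t-2,k)}$ is not order-isomorphic to $\sigma_1\sigma_2\cdots\sigma_{\min(t-1,k-a+1)}$, then $\{1,2,\dots,s\}$ is reversibly deletable for $p$ with respect to $\{(\sigma,[t-2])\}$.
   Context: Two words of distinct integers are order-isomorphic if they reduce to the same permutation. A vincular pattern $(\sigma,X)$, $\sigma\in S_\ell$, $X\subseteq[\ell-1]$, is contained in $\pi$ if some subsequence $\pi_{i_1}\cdots\pi_{i_\ell}$ ($i_1<\dots<i_\ell$) is order-isomorphic to $\sigma$ with $i_{x+1}=i_x+1$ for $x\in X$. For $p\in S_k$ and $w\in[n]^k$ with distinct letters order-isomorphic to $p$, $S_n^B(p;w)$ is the set of $B$-avoiding $\pi\in S_n$ with $\pi_i=w_i$ ($i\le k$). $d_R$ deletes entries in positions $R$ and reduces (for words: subtract from each remaining letter the number of deleted letters smaller than it). $R\subseteq[k]$ is reversibly deletable for $p$ w.r.t. $B$ if for every $n$ and $w$ with $S_n^B(p;w)\ne\emptyset$, $d_R$ is a bijection $S_n^B(p;w)\to S_{n-|R|}^B(d_R(p);d_R(w))$. *)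

From mathcomp Require Import all_boot.
Set Implicit Arguments. Unset Strict Implicit. Unset Printing Implicit Defensive.

Definition is_perm (n : nat) (pi : seq nat) : Prop := perm_eq pi (iota 1 n).

Definition order_iso (u v : seq nat) : Prop :=
  size u = size v /\
  forall i j, i < size u -> j < size u ->
    (nth 0 u i < nth 0 u j) = (nth 0 v i < nth 0 v j).

(* vincular pattern (sigma, X): X is a list of (1-based) adjacency
   positions x in [l-1] forcing i_{x+1} = i_x + 1. Positions of pi are
   0-based in idx. *)
Definition contains_vinc (sigma : seq nat) (X : seq nat) (pi : seq nat) : Prop :=
  exists idx : seq nat,
    [/\ size idx = size sigma,
        sorted ltn idx,
        all (fun i => i < size pi) idx,
        order_iso [seq nth 0 pi i | i <- idx] sigma &
        forall x, x \in X -> 1 <= x -> x < size sigma ->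
          nth 0 idx x = (nth 0 idx x.-1).+1].

Definition avoids (B : seq (seq nat * seq nat)) (pi : seq nat) : Prop :=
  forall sX, sX \in B -> ~ contains_vinc sX.1 sX.2 pi.

(* membership in S_n^B(p; w): B-avoiding permutations of S_n with prefix w
   (the set does not depend on p beyond the standing condition on w) *)
Definition SnB (n : nat) (B : seq (seq nat * seq nat)) (w pi : seq nat) : Prop :=
  [/\ is_perm n pi, avoids B pi & forall i, i < size w -> nth 0 pi i = nth 0 w i].

(* d_R : delete the entries in (1-based) positions R and reduce: subtract
   from each remaining letter the number of deleted letters smaller than it *)
Definition dR (R : seq nat) (u : seq nat) : seq nat :=
  let D := [seq nth 0 u i | i <- iota 0 (size u) & i.+1 \in R] in
  [seq nth 0 u i - count (fun y => y < nth 0 u i) D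
     | i <- iota 0 (size u) & i.+1 \notin R].

Definition admissible_word (n k : nat) (p w : seq nat) : Prop :=
  [/\ size w = k, all (fun x => 0 < x <= n) w, uniq w & order_iso w p].

Definition rev_deletable (k : nat) (p : seq nat) (R : seq nat)
    (B : seq (seq nat * seq nat)) : Prop :=
  forall n w, admissible_word n k p w ->
    (exists pi, SnB n B w pi) ->
    [/\ (forall pi, SnB n B w pi -> SnB (n - size R) B (dR R w) (dR R pi)),
        (forall pi1 pi2, SnB n B w pi1 -> SnB n B w pi2 ->
            dR R pi1 = dR R pi2 -> pi1 = pi2) &
        (forall tau, SnB (n - size R) B (dR R w) tau ->
            exists2 pi, SnB n B w pi & dR R pi = tau)].

From mathcomp Require Import all_boot zify.

(* Let B = {(sigma, [m-1])}: the first m letters of sigma must occupy adjacent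
   positions.  Fix a prefix w of length k and delete the first s positions.
   Every pi in S_n^B(p; w) starts with D := take s w, so d_R pi is the tail
   drop s pi with each letter reduced by the map  red D x = x - #{y in D | y < x}.
   - red D is strictly increasing off D and maps [1..n] \ D onto [1..n-|D|];
     hence d_R is injective and its inverse puts D back in front and lifts
     every letter through the inverse map unred D (the lift of tau).
   - An occurrence of the pattern in the tail shifts to an occurrence in pi,
     and conversely an occurrence in pi lying entirely after position s
     shifts down to the tail.  So d_R preserves avoidance.
   - An occurrence in the lift of tau starting at a position a < s has its
     first min(m, k-a) letters at the adjacent positions a, a+1, ... inside
     the prefix w, which is order-isomorphic to p; this exhibits a factor of
     p order-isomorphic to a prefix of sigma, excluded by hypothesis. *)

Lemma is_permP n pi :
  is_perm n pi <-> [/\ uniq pi, size pi = n & forall x, x \in pi -> 0 < x <= n].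
Proof.
split=> [P | [U S R]].
- split; first by rewrite (perm_uniq P) iota_uniq.
    by rewrite (perm_size P) size_iota.
  by move=> x; rewrite (perm_mem P) mem_iota; lia.
- apply: uniq_perm; rewrite ?iota_uniq //.
  have sub : {subset pi <= iota 1 n} by move=> x /R; rewrite mem_iota; lia.
  by have [] := uniq_min_size U sub; rewrite ?size_iota ?S.
Qed.

(* The value of the letter x once the letters of D are deleted and the
   remaining letters are reduced. *)
Definition red (D : seq nat) (x : nat) : nat := x - count (fun y => y < x) D.

Lemma count_between (D : seq nat) (a b : nat) :
  uniq D -> count (fun y => a <= y < b) D <= b - a.
Proof.
move=> U; rewrite -size_filter -[b - a](size_iota a).
apply: uniq_leq_size; first exact: filter_uniq.
by move=> y; rewrite mem_filter mem_iota => /andP [/andP [? ?] _]; lia.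
Qed.

Lemma red_mono (D : seq nat) (x y : nat) :
  uniq D -> x \notin D -> x < y -> red D x < red D y.
Proof.
move=> U nx lt.
have split : count (fun z => z < y) D =
             count (fun z => z < x) D + count (fun z => x.+1 <= z < y) D.
  elim: D U nx => //= z D IH /andP [zD U]; rewrite inE negb_or => /andP [zx nx].
  rewrite IH //; lia.
have lex : count (fun z => z < x) D <= x.
  by have := count_between D 0 x U; rewrite subn0.
have := count_between D x.+1 y U; rewrite /red split; lia.
Qed.

Lemma red_range (D : seq nat) (n x : nat) :
  uniq D -> (forall y, y \in D -> 0 < y <= n) ->
  x \notin D -> 0 < x <= n -> 0 < red D x <= n - size D.
Proof.
move=> U R nx xr.
have below : count (fun y => y < x) D = count (fun y => 1 <= y < x) D.
  by apply: eq_in_count => y /R; lia.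
have above : count (predC (fun y => y < x)) D = count (fun y => x.+1 <= y < n.+1) D.
  apply: eq_in_count => y yD /=; have := R y yD.
  have : y != x by apply: contraNneq nx => <-.
  lia.
have := count_predC (fun y => y < x) D.
have := count_between D 1 x U; have := count_between D x.+1 n.+1 U.
rewrite /red below above; lia.
Qed.

Lemma red_lt (D : seq nat) (x y : nat) : uniq D -> x \notin D -> y \notin D ->
  (red D x < red D y) = (x < y).
Proof.
move=> U nx ny; case: (ltngtP x y) => [xy | yx | ->]; last by rewrite ltnn.
- exact: red_mono.
- by apply/negbTE; rewrite -leqNgt ltnW // red_mono.
Qed.

Lemma red_inj (D : seq nat) (x y : nat) : uniq D -> x \notin D -> y \notin D ->
  red D x = red D y -> x = y.
Proof.
move=> U nx ny e; case: (ltngtP x y) => // [xy | yx].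
- by have := red_mono D x y U nx xy; rewrite e ltnn.
- by have := red_mono D y x U ny yx; rewrite e ltnn.
Qed.

Lemma order_iso_red (D l v : seq nat) : uniq D -> (forall x, x \in l -> x \notin D) ->
  order_iso (map (red D) l) v <-> order_iso l v.
Proof.
move=> U N; rewrite /order_iso size_map.
have E i j : i < size l -> j < size l ->
    (nth 0 (map (red D) l) i < nth 0 (map (red D) l) j) = (nth 0 l i < nth 0 l j).
  by move=> hi hj; rewrite !(nth_map 0) // red_lt //; apply/N/mem_nth.
by split=> [[S H] | [S H]]; split=> // i j hi hj; rewrite -H // E.
Qed.

Lemma dR_prefix s (u : seq nat) : s <= size u ->
  dR (iota 1 s) u = map (red (take s u)) (drop s u).
Proof.
move=> su; rewrite /dR.
have split : iota 0 (size u) = iota 0 s ++ iota s (size u - s) by rewrite -iotaD subnKC.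
have keep_all (P : pred nat) r : {in r, P =1 predT} -> filter P r = r.
  by move=> h; rewrite (eq_in_filter h) filter_predT.
have keep_none (P : pred nat) r : {in r, P =1 pred0} -> filter P r = [::].
  by move=> h; rewrite (eq_in_filter h) filter_pred0.
have -> : [seq i <- iota 0 (size u) | i.+1 \in iota 1 s] = iota 0 s.
  rewrite split filter_cat keep_all ?keep_none ?cats0 // => i;
  rewrite !mem_iota /= => hi; lia.
have -> : [seq i <- iota 0 (size u) | i.+1 \notin iota 1 s] = iota s (size u - s).
  rewrite split filter_cat keep_none ?keep_all // => i;
  rewrite !mem_iota /= => hi; lia.
rewrite map_nth_iota0 //.
have -> : drop s u = [seq nth 0 u i | i <- iota s (size u - s)].
  by rewrite map_nth_iota // take_oversize // size_drop.
by rewrite -map_comp.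
Qed.

Definition occurs_at (sigma X pi idx : seq nat) : Prop :=
  [/\ size idx = size sigma,
      sorted ltn idx,
      all (fun i => i < size pi) idx,
      order_iso [seq nth 0 pi i | i <- idx] sigma &
      forall x, x \in X -> 1 <= x -> x < size sigma ->
        nth 0 idx x = (nth 0 idx x.-1).+1].

Lemma notin_take_of_drop (pi : seq nat) s x :
  uniq pi -> x \in drop s pi -> x \notin take s pi.
Proof.
move=> U xd; have : uniq (take s pi ++ drop s pi) by rewrite cat_take_drop.
by rewrite cat_uniq => /and3P [_ /hasPn H _]; apply: H.
Qed.

Lemma occurs_at_shift {sigma X pi idx : seq nat} {s : nat} :
  uniq pi -> s <= size pi ->
  occurs_at sigma X pi (map (addn s) idx) <->
  occurs_at sigma X (map (red (take s pi)) (drop s pi)) idx.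
Proof.
move=> U hs; set D := take s pi; set tail := map (red D) (drop s pi).
have Esort : sorted ltn (map (addn s) idx) = sorted ltn idx.
  by rewrite sorted_map; apply: eq_sorted => // x y /=; rewrite ltn_add2l.
have Eall : all (fun i => i < size pi) (map (addn s) idx) =
            all (fun i => i < size tail) idx.
  by rewrite all_map size_map size_drop; apply: eq_all => i /=; lia.
have Evals : all (fun i => i < size tail) idx ->
    order_iso [seq nth 0 pi i | i <- map (addn s) idx] sigma <->
    order_iso [seq nth 0 tail i | i <- idx] sigma.
  move=> /allP A; rewrite size_map size_drop in A.
  have -> : [seq nth 0 tail i | i <- idx] =
            map (red D) [seq nth 0 pi i | i <- map (addn s) idx].
    rewrite -!map_comp; apply/eq_in_map => i /A hi /=.
    by rewrite (nth_map 0) ?size_drop ?nth_drop.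
  apply: iff_sym; apply: order_iso_red; first exact: take_uniq.
  move=> _ /mapP [_ /mapP [i /A hi ->] ->]; apply: notin_take_of_drop => //.
  by rewrite -nth_drop mem_nth // size_drop.
have Eadj : size idx = size sigma ->
    (forall x, 1 <= x -> x < size sigma ->
       (nth 0 (map (addn s) idx) x = (nth 0 (map (addn s) idx) x.-1).+1) <->
       (nth 0 idx x = (nth 0 idx x.-1).+1)).
  by move=> Sz x x1 x2; rewrite !(nth_map 0) ?Sz //; lia.
split=> [[S1 S2 S3 S4 S5] | [S1 S2 S3 S4 S5]]; rewrite ?size_map in S1.
- rewrite Eall in S3; split=> //; [by rewrite -Esort | exact/Evals |].
  by move=> x xX x1 x2; apply/(Eadj S1 x x1 x2)/S5.
- have S3' := S3; rewrite -Eall in S3'.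
  split; rewrite ?size_map ?Esort //; first exact/Evals.
  by move=> x xX x1 x2; apply/(Eadj S1 x x1 x2)/S5.
Qed.

Lemma red_perm (D u : seq nat) n : uniq D -> (forall y, y \in D -> 0 < y <= n) ->
  uniq u -> (forall x, x \in u -> x \notin D /\ 0 < x <= n) ->
  size u = n - size D -> is_perm (n - size D) (map (red D) u).
Proof.
move=> UD RD Uu Ru Su; apply/is_permP; split; rewrite ?size_map //.
- rewrite map_inj_in_uniq // => x y xu yu; apply: red_inj => //.
  + by case: (Ru x xu).
  + by case: (Ru y yu).
- by move=> _ /mapP [x /Ru [nx rx] ->]; apply: red_range.
Qed.

Definition unused_letters (D : seq nat) n : seq nat := [seq x <- iota 1 n | x \notin D].

Definition unred (D : seq nat) n y : nat :=
  nth 0 (unused_letters D n) (index y (map (red D) (unused_letters D n))).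

Lemma size_unused_letters (D : seq nat) n :
  uniq D -> (forall y, y \in D -> 0 < y <= n) ->
  size (unused_letters D n) = n - size D.
Proof.
move=> UD RD; have := count_predC (mem D) (iota 1 n).
have -> : count (mem D) (iota 1 n) = size D.
  rewrite -size_filter; apply/perm_size/uniq_perm; rewrite ?filter_uniq ?iota_uniq //.
  move=> x; rewrite mem_filter mem_iota /=.
  by case xD: (x \in D) => //=; have := RD x xD; lia.
by rewrite size_iota /unused_letters size_filter => E; rewrite -[in RHS]E addKn.
Qed.

Lemma unred_spec (D : seq nat) n y : uniq D -> (forall y, y \in D -> 0 < y <= n) ->
  0 < y <= n - size D ->
  [/\ unred D n y \notin D, 0 < unred D n y <= n & red D (unred D n y) = y].
Proof.
move=> UD RD yr.
have RC x : x \in unused_letters D n -> x \notin D /\ 0 < x <= n.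
  by rewrite mem_filter mem_iota => /andP [-> ?]; split=> //; lia.
have P := red_perm D (unused_letters D n) n UD RD (filter_uniq _ (iota_uniq 1 n)) RC
  (size_unused_letters D n UD RD).
have yin : y \in map (red D) (unused_letters D n) by rewrite (perm_mem P) mem_iota; lia.
have hi : index y (map (red D) (unused_letters D n)) < size (unused_letters D n).
  by rewrite -(size_map (red D)) index_mem.
have [nx rx] := RC _ (mem_nth 0 hi); split=> //.
by rewrite /unred -(nth_map 0 0) // nth_index.
Qed.

Lemma unred_red (D : seq nat) n x : uniq D -> (forall y, y \in D -> 0 < y <= n) ->
  x \notin D -> 0 < x <= n -> unred D n (red D x) = x.
Proof.
move=> UD RD nx rx.
have [ne _ e] := unred_spec D n (red D x) UD RD (red_range D n x UD RD nx rx).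
exact: red_inj D _ _ UD ne nx e.
Qed.

Lemma occurs_at_adjacent {sigma pi idx : seq nat} {m : nat} (j : nat) :
  occurs_at sigma (iota 1 (m - 1)) pi idx -> j < m -> j < size sigma ->
  nth 0 idx j = nth 0 idx 0 + j.
Proof.
case=> _ _ _ _ adj; elim: j => [|j IH] jm js; first by rewrite addn0.
rewrite adj ?mem_iota //= ?IH; lia.
Qed.

Lemma prefix_occurrence {m : nat} {sigma p w pi idx : seq nat} :
  m <= size sigma -> size w = size p -> order_iso w p ->
  (forall i, i < size w -> nth 0 pi i = nth 0 w i) ->
  occurs_at sigma (iota 1 (m - 1)) pi idx -> nth 0 idx 0 < size p ->
  order_iso (take m (drop (nth 0 idx 0) p))
            (take (minn m (size p - nth 0 idx 0)) sigma).
Proof.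
move=> ms Sw [_ wp] prefix Hocc a0p.
have [S1 _ _ [_ vals] _] := Hocc.
split; first by rewrite !size_take_min size_drop; lia.
move=> i j; rewrite size_take_min size_drop => hi hj.
(* The letters p_(a+i), p_(a+j) compare as w_(a+i), w_(a+j), i.e. as the
   entries of pi at the occurrence positions idx_i = a+i and idx_j = a+j. *)
rewrite !nth_take ?nth_drop; try lia.
rewrite -wp ?Sw; try lia.
rewrite -!prefix ?Sw; try lia.
rewrite -(occurs_at_adjacent i Hocc); try lia.
rewrite -(occurs_at_adjacent j Hocc); try lia.
by have := vals i j; rewrite !(nth_map 0) ?size_map ?S1; try lia.
Qed.

Lemma avoids_single (sX : seq nat * seq nat) (pi : seq nat) :
  avoids [:: sX] pi <-> forall idx, ~ occurs_at sX.1 sX.2 pi idx.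
Proof.
split=> [h idx o | h sX']; first by apply: (h sX); [rewrite mem_head | exists idx].
by rewrite inE => /eqP -> [idx /h].
Qed.

Lemma sorted_head_min {idx : seq nat} {i : nat} :
  sorted ltn idx -> i \in idx -> nth 0 idx 0 <= i.
Proof.
case: idx => [|a l] //= srt; rewrite inE => /orP [/eqP -> // | il].
by have /allP /(_ i il) := order_path_min ltn_trans srt; apply: ltnW.
Qed.

Section PrefixDeletion.

Variables (sigma w : seq nat) (n s m : nat).
Hypotheses (Uw : uniq w) (Rw : forall y, y \in w -> 0 < y <= n) (sw : s <= size w).

Let D := take s w.
Let B := [:: (sigma, iota 1 (m - 1))].

Let UD : uniq D. Proof. exact: take_uniq. Qed.
Let RD y : y \in D -> 0 < y <= n. Proof. by move/mem_take; apply: Rw. Qed.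
Let SD : size D = s. Proof. by rewrite size_takel. Qed.
Let wn : size w <= n.
Proof.
rewrite -(size_iota 1 n); apply: uniq_leq_size => // y /Rw.
by rewrite mem_iota; lia.
Qed.

Lemma SnB_take pi : SnB n B w pi -> take s pi = D.
Proof.
case=> /is_permP [_ Spi _] _ prefix.
apply: (@eq_from_nth _ 0); rewrite !size_takel ?Spi //; try lia.
by move=> i hi; rewrite !nth_take // prefix; lia.
Qed.

Lemma SnB_dR pi : SnB n B w pi -> dR (iota 1 s) pi = map (red D) (drop s pi).
Proof.
move=> H; have [/is_permP [_ Spi _] _ _] := H.
rewrite dR_prefix; last by rewrite Spi; lia.
by rewrite -(SnB_take _ H).
Qed.

Lemma dR_word : dR (iota 1 s) w = map (red D) (drop s w).
Proof. exact: dR_prefix. Qed.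

Lemma dR_SnB pi : SnB n B w pi -> SnB (n - s) B (dR (iota 1 s) w) (dR (iota 1 s) pi).
Proof.
move=> H; have [/is_permP [Upi Spi Rpi] Api prefix] := H.
have tail_out x : x \in drop s pi -> x \notin D.
  by rewrite -(SnB_take _ H); apply: notin_take_of_drop.
rewrite (SnB_dR _ H) dR_word; split.
- have -> : n - s = n - size D by rewrite SD.
  apply: red_perm => //.
  + exact: drop_uniq.
  + by move=> x xd; split; [apply: tail_out | apply/Rpi/(mem_drop xd)].
  + by rewrite size_drop Spi SD.
- apply/avoids_single => idx /= occ_tail.
  apply: ((avoids_single _ _).1 Api (map (addn s) idx)).
  apply/occurs_at_shift => //; first lia.
  by rewrite (SnB_take _ H).
- rewrite size_map size_drop => i hi.
  by rewrite !(nth_map 0) ?size_drop ?nth_drop ?prefix //; lia.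
Qed.

Lemma dR_inj pi1 pi2 : SnB n B w pi1 -> SnB n B w pi2 ->
  dR (iota 1 s) pi1 = dR (iota 1 s) pi2 -> pi1 = pi2.
Proof.
move=> H1 H2; rewrite (SnB_dR _ H1) (SnB_dR _ H2) => E.
have [/is_permP [U1 S1 _] _ _] := H1; have [/is_permP [U2 S2 _] _ _] := H2.
rewrite -(cat_take_drop s pi1) -(cat_take_drop s pi2) (SnB_take _ H1) (SnB_take _ H2).
congr (_ ++ _); apply: (@eq_from_nth _ 0); first by rewrite !size_drop S1 S2.
move=> i; rewrite size_drop S1 => hi.
have := congr1 (nth 0 ^~ i) E; rewrite !(nth_map 0) ?size_drop ?S1 ?S2 //.
apply: red_inj => //.
- by rewrite -(SnB_take _ H1); apply/notin_take_of_drop/mem_nth; rewrite ?size_drop ?S1.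
- by rewrite -(SnB_take _ H2); apply/notin_take_of_drop/mem_nth; rewrite ?size_drop ?S2.
Qed.

Definition lift (tau : seq nat) : seq nat := D ++ map (unred D n) tau.

Lemma lift_spec tau : is_perm (n - s) tau ->
  [/\ is_perm n (lift tau), take s (lift tau) = D & dR (iota 1 s) (lift tau) = tau].
Proof.
move=> /is_permP [Ut St Rt].
have FS y : y \in tau ->
    [/\ unred D n y \notin D, 0 < unred D n y <= n & red D (unred D n y) = y].
  by move=> yt; apply: unred_spec => //; rewrite SD; apply: Rt.
have tk : take s (lift tau) = D by rewrite take_size_cat.
have dp : drop s (lift tau) = map (unred D n) tau by rewrite drop_size_cat.
have red_unred : map (red D) (map (unred D n) tau) = tau.
  by rewrite -map_comp map_id_in // => y /FS [].
have Sl : size (lift tau) = n by rewrite size_cat SD size_map St; lia.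
split=> //; last by rewrite dR_prefix ?Sl ?tk ?dp ?red_unred //; lia.
apply/is_permP; split=> //.
- rewrite cat_uniq UD /=; apply/andP; split.
    by apply/hasPn => _ /mapP [y /FS [? _ _] ->].
  rewrite map_inj_in_uniq // => y1 y2 /FS [_ _ e1] /FS [_ _ e2] e.
  by rewrite -e1 -e2 e.
- by move=> x; rewrite mem_cat => /orP [/RD // | /mapP [y /FS [_ ? _] ->]].
Qed.

Lemma lift_prefix tau : is_perm (n - s) tau ->
  (forall i, i < size (dR (iota 1 s) w) -> nth 0 tau i = nth 0 (dR (iota 1 s) w) i) ->
  forall i, i < size w -> nth 0 (lift tau) i = nth 0 w i.
Proof.
move=> /is_permP [_ St _] prefix i hi; rewrite /lift nth_cat SD.
case: ltnP => his; first by rewrite nth_take.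
have x_out : nth 0 w i \notin D.
  apply: notin_take_of_drop => //; rewrite -(subnKC his) -nth_drop.
  by apply: mem_nth; rewrite size_drop ltn_sub2r // (leq_ltn_trans his hi).
rewrite (nth_map 0) ?St; last lia.
rewrite prefix dR_word ?size_map ?size_drop; last lia.
rewrite (nth_map 0) ?size_drop ?nth_drop ?subnKC //; last lia.
by apply: unred_red => //; apply/Rw/mem_nth.
Qed.

(* Occurrences in the lift start either inside the prefix (excluded by the
   hypothesis on the factors of p) or after it (and then come from tau). *)
Lemma lift_avoids {p tau : seq nat} :
  m <= size sigma -> size w = size p -> order_iso w p ->
  (forall a, a < s ->
     ~ order_iso (take m (drop a p)) (take (minn m (size p - a)) sigma)) ->
  is_perm (n - s) tau -> avoids B tau ->
  (forall i, i < size w -> nth 0 (lift tau) i = nth 0 w i) ->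
  avoids B (lift tau).
Proof.
move=> ms Swp wp no_factor Pt At prefix.
have [/is_permP [Ul Sl _] tk dl] := lift_spec _ Pt.
apply/avoids_single => idx /= Hocc; have [_ srt _ _ _] := Hocc.
case: (ltnP (nth 0 idx 0) s) => start.
  apply: (no_factor _ start); apply: (prefix_occurrence ms Swp wp prefix Hocc).
  by rewrite -Swp; apply: leq_trans sw.
have late : idx = map (addn s) (map (subn^~ s) idx).
  rewrite -map_comp map_id_in // => i /(sorted_head_min srt) hi /=.
  by rewrite subnKC // (leq_trans start).
have sl : s <= size (lift tau) by rewrite Sl; lia.
rewrite late in Hocc; have := (occurs_at_shift Ul sl).1 Hocc.
by rewrite -dR_prefix // dl; apply: ((avoids_single _ _).1 At).
Qed.

Lemma dR_surj (p tau : seq nat) :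
  m <= size sigma -> size w = size p -> order_iso w p ->
  (forall a, a < s ->
     ~ order_iso (take m (drop a p)) (take (minn m (size p - a)) sigma)) ->
  SnB (n - s) B (dR (iota 1 s) w) tau ->
  exists2 pi, SnB n B w pi & dR (iota 1 s) pi = tau.
Proof.
move=> ms Swp wp no_factor [Pt At prefix_t]; have [Pl _ dl] := lift_spec _ Pt.
have prefix := lift_prefix _ Pt prefix_t.
by exists (lift tau) => //; split=> //; apply: (lift_avoids ms Swp wp no_factor).
Qed.

End PrefixDeletion.

Theorem prefix_deletable m k s (sigma p : seq nat) :
  size p = k -> s <= k -> m <= size sigma ->
  (forall a, 1 <= a <= s ->
     ~ order_iso (take m (drop a.-1 p)) (take (minn m (k - a + 1)) sigma)) ->
  rev_deletable k p (iota 1 s) [:: (sigma, iota 1 (m - 1))].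
Proof.
move=> Sp sk ms no_factor n w [Sw /allP Rw Uw wp] _.
have sw : s <= size w by rewrite Sw.
have no_factor' a : a < s ->
    ~ order_iso (take m (drop a p)) (take (minn m (size p - a)) sigma).
  move=> a_s; rewrite Sp; have := no_factor a.+1.
  by rewrite addn1 subnSK ?(leq_trans a_s) //; apply; apply/andP.
rewrite size_iota; split.
- exact: dR_SnB.
- exact: dR_inj.
- by move=> tau; apply: dR_surj ms _ wp no_factor' => //; rewrite Sw.
Qed.

Theorem mainTheorem11 (t k s : nat) (sigma p : seq nat) :
  is_perm t sigma -> is_perm k p -> 1 <= s <= k ->
  ((forall a, 1 <= a <= s ->
      ~ order_iso (take t (drop a.-1 p)) (take (minn t (k - a + 1)) sigma)) ->
     rev_deletable k p (iota 1 s) [:: (sigma, iota 1 (t - 1))]) /\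
  ((forall a, 1 <= a <= s ->
      ~ order_iso (take (t - 1) (drop a.-1 p)) (take (minn (t - 1) (k - a + 1)) sigma)) ->
     rev_deletable k p (iota 1 s) [:: (sigma, iota 1 (t - 2))]).
Proof.
move=> /is_permP [_ St _] /is_permP [_ Sp _] /andP [_ sk].
split=> no_factor.
- by apply: prefix_deletable Sp sk _ no_factor; rewrite St.
- have -> : t - 2 = t - 1 - 1 by rewrite -subnDA.
  by apply: prefix_deletable Sp sk _ no_factor; rewrite St leq_subr.
Qed.
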